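(* Let $\mathfrak{U}$ be a Banach algebra such that $\mathfrak{U}^\sharp$ is symmetrically pseudo-amenable. Then every bounded Jordan derivation from $\mathfrak{U}$ into a symmetric Banach $\mathfrak{U}$-bimodule $X$ is a derivation.
   Context: A Banach $\mathfrak{U}$-bimodule $X$ is symmetric if $ax=xa$ for all $a\in\mathfrak{U}$, $x\in X$. $\mathfrak{U}^\sharp=\mathfrak{U}\oplus\mathbb{C}1$ is the unitization of $\mathfrak{U}$ with the $\ell^1$-norm (a unit is adjoined even if $\mathfrak{U}$ is unital). A linear map $\delta:\mathfrak{U}\to X$ is a derivation if $\delta(ab)=\delta(a)b+a\delta(b)$, and a Jordan derivation if $\delta(ab+ba)=\delta(a)b+a\delta(b)+\delta(b)a+b\delta(a)$, for all $a,b$. For a Banach algebra $\mathfrak{A}$, $\mathfrak{A}\widehat{\otimes}\mathfrak{A}$ is the projective tensor product with $a(b\otimes c)=ab\otimes c$, $(b\otimes c)a=b\otimes ca$, $\pi(b\otimes c)=bc$ (extended linearly and continuously); the flip is $(b\otimes c)^\circ=c\otimes b$ and $\mathbf{t}$ is symmetric if $\mathbf{t}^\circ=\mathbf{t}$. A symmetric approximate diagonal is a net $\{\mathbf{t}_\lambda\}$ (not necessarily bounded) of symmetric elements with $a\mathbf{t}_\lambda-\mathbf{t}_\lambda a\to0$ and $\pi(\mathbf{t}_\lambda)a\to a$ for all $a\in\mathfrak{A}$; $\mathfrak{A}$ is symmetrically pseudo-amenable if it has one. *)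

From HB Require Import structures.
From mathcomp Require Import all_boot all_order all_algebra.
From mathcomp Require Import all_classical all_reals all_analysis.
From mathcomp Require Import complex.
Set Implicit Arguments. Unset Strict Implicit. Unset Printing Implicit Defensive.
Import Order.TTheory GRing.Theory Num.Theory.
Import numFieldNormedType.Exports.
Local Open Scope ring_scope.

Local Open Scope complex_scope.
Definition Cplx (R : realType) : numFieldType := R[i].
Local Close Scope complex_scope.

Section Defs.
Variable K : numFieldType.

Definition bilinear_map (V W Y : lmodType K) (f : V -> W -> Y) : Prop :=
  (forall (c : K) x x' y, f (c *: x + x') y = c *: f x y + f x' y) /\
  (forall (c : K) x y y', f x (c *: y + y') = c *: f x y + f x y').

(* A (not necessarily unital) Banach algebra structure on the Banach space U,
   with multiplication mul (completeness comes from the type of U). *)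
Record banach_algebra (U : normedModType K) (mul : U -> U -> U) : Prop := {
  ba_bilinear : bilinear_map mul;
  ba_assoc : forall a b c, mul (mul a b) c = mul a (mul b c);
  ba_submult : forall a b, `|mul a b| <= `|a| * `|b| }.

Record banach_bimodule (U X : normedModType K) (mul : U -> U -> U)
    (lact : U -> X -> X) (ract : X -> U -> X) : Prop := {
  bm_lbilinear : bilinear_map lact;
  bm_rbilinear : bilinear_map ract;
  bm_lassoc : forall a b x, lact (mul a b) x = lact a (lact b x);
  bm_rassoc : forall a b x, ract x (mul a b) = ract (ract x a) b;
  bm_mid : forall a b x, lact a (ract x b) = ract (lact a x) b;
  bm_bounded : exists M : K, 0 < M /\
     forall a x, `|lact a x| <= M * `|a| * `|x| /\ `|ract x a| <= M * `|a| * `|x| }.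

Definition symmetric_bimodule (U X : Type) (lact : U -> X -> X) (ract : X -> U -> X) :=
  forall a x, lact a x = ract x a.

Definition linear_map (V Y : lmodType K) (D : V -> Y) : Prop :=
  forall (c : K) a b, D (c *: a + b) = c *: D a + D b.

Definition bounded_map (V Y : normedModType K) (D : V -> Y) : Prop :=
  exists M : K, forall a, `|D a| <= M * `|a|.

Definition derivation (U X : lmodType K) (mul : U -> U -> U)
    (lact : U -> X -> X) (ract : X -> U -> X) (D : U -> X) : Prop :=
  linear_map D /\ forall a b, D (mul a b) = ract (D a) b + lact a (D b).

Definition jordan_derivation (U X : lmodType K) (mul : U -> U -> U)
    (lact : U -> X -> X) (ract : X -> U -> X) (D : U -> X) : Prop :=
  linear_map D /\ forall a b,
    D (mul a b + mul b a) = ract (D a) b + lact a (D b) + ract (D b) a + lact b (D a).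

(* ---- Unitization U^# = U (+) K 1, with the l^1-norm ---- *)
Definition unit_mul (U : lmodType K) (mul : U -> U -> U) (x y : U * K) : U * K :=
  (mul x.1 y.1 + x.2 *: y.1 + y.2 *: x.1, x.2 * y.2).

(* the underlying normed space of U^# (topology only used; the norm is unit_norm) *)
Definition unitz (U : normedModType K) : normedModType K := (U * K)%type.

Definition unit_norm (U : normedModType K) (x : U * K) : K := `|x.1| + `|x.2|.

(* ---- Elements of the projective tensor product U^# (x)^ U^# ----
   Every element of the completed projective tensor product is represented
   by an absolutely summable series  sum_n b_n (x) c_n. *)
Definition tens_rep (U : Type) := nat -> (U * K) * (U * K).

Definition abs_summable (U : normedModType K) (t : tens_rep U) : Prop :=
  exists M : K, forall N, \sum_(n < N) unit_norm (t n).1 * unit_norm (t n).2 <= M.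

Definition bil_bounded (U Y : normedModType K) (Phi : U * K -> U * K -> Y) (M : K) :=
  bilinear_map Phi /\ forall x y, `|Phi x y| <= M * unit_norm x * unit_norm y.

(* The image  sum_n Phi(b_n, c_n)  of t under the linearization of Phi. *)
Definition tens_eval (U Y : normedModType K) (Phi : U * K -> U * K -> Y)
    (t : tens_rep U) : Y :=
  limn (series (fun n => Phi (t n).1 (t n).2)).

Definition tens_pi (U : normedModType K) (mul : U -> U -> U) (t : tens_rep U) : U * K :=
  limn (series (fun n => unit_mul mul (t n).1 (t n).2) : nat -> unitz U).

Definition directed (I : Type) (le : I -> I -> Prop) : Prop :=
  (exists i : I, True) /\ (forall i, le i i) /\
  (forall i j k, le i j -> le j k -> le i k) /\
  (forall i j, exists k, le i k /\ le j k).

(* U^# is symmetrically pseudo-amenable: there is a net (t_i) of symmetric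
   elements of U^# (x)^ U^# with  a t_i - t_i a -> 0  (in projective norm)
   and  pi(t_i) a -> a,  for all a in U^#.
   - equality t^o = t in the completed projective tensor product is tested
     against all bounded bilinear maps into Banach spaces (universal property);
   - the projective norm ||u||_pi equals the sup of ||Phi~(u)|| over all
     contractive bilinear maps Phi into Banach spaces (universal property). *)
Definition unitization_sym_pseudo_amenable (U : normedModType K)
    (mul : U -> U -> U) : Prop :=
  exists (I : Type) (le : I -> I -> Prop) (t : I -> tens_rep U),
    directed le /\
    (forall i, abs_summable (t i)) /\
    (forall i (Y : completeNormedModType K) (Phi : U * K -> U * K -> Y) (M : K),
        bil_bounded Phi M ->
        tens_eval (fun x y => Phi y x) (t i) = tens_eval Phi (t i)) /\
    (forall (a : U * K) (eps : K), 0 < eps -> exists i0, forall i, le i0 i ->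
        forall (Y : completeNormedModType K) (Phi : U * K -> U * K -> Y),
          bil_bounded Phi 1 ->
          `|tens_eval (fun x y => Phi (unit_mul mul a x) y) (t i)
            - tens_eval (fun x y => Phi x (unit_mul mul y a)) (t i)| <= eps) /\
    (forall (a : U * K) (eps : K), 0 < eps -> exists i0, forall i, le i0 i ->
        unit_norm (unit_mul mul (tens_pi mul (t i)) a - a) <= eps).

End Defs.

From HB Require Import structures.
From mathcomp Require Import all_boot all_order all_algebra.
From mathcomp Require Import all_classical all_reals all_analysis.
From mathcomp Require Import complex.
From mathcomp Require Import ring.
Set Implicit Arguments. Unset Strict Implicit. Unset Printing Implicit Defensive.
Import Order.TTheory GRing.Theory Num.Theory.
Import numFieldNormedType.Exports.
Local Open Scope ring_scope.

(* In a symmetric bimodule a Jordan derivation satisfies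
   D(ab + ba) = 2 (D(a) b + D(b) a), so the bounded bilinear form
   Psi(x, y) = D(x) y on the unitization (with D(1) = 0) obeys
     Psi(ax, y) - Psi(x, ya) - Psi(x, ay) + Psi(xa, y) = 2 D(a) xy.
   Evaluate it on a symmetric approximate diagonal t.  The first two terms are
   Psi applied to a t - t a, and by the symmetry of t the last two are the
   flipped form applied to a t - t a, so the left-hand side tends to 0.  The
   right-hand side is 2 D(a) pi(t), which tends to 2 D(a) because pi(t) -> 1.
   Hence D = 0, which is trivially a derivation. *)

Section BilinearMap.
Variables (K : numFieldType) (V W Y : lmodType K) (f : V -> W -> Y).
Hypothesis f_bil : bilinear_map f.

Lemma bilinear_mapDl x x' y : f (x + x') y = f x y + f x' y.
Proof. by have := f_bil.1 1 x x' y; rewrite !scale1r. Qed.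

Lemma bilinear_map0l y : f 0 y = 0.
Proof. by apply: (@addrI _ (f 0 y)); rewrite -bilinear_mapDl !addr0. Qed.

Lemma bilinear_mapZl c x y : f (c *: x) y = c *: f x y.
Proof. by have := f_bil.1 c x 0 y; rewrite addr0 bilinear_map0l addr0. Qed.

Lemma bilinear_mapDr x y y' : f x (y + y') = f x y + f x y'.
Proof. by have := f_bil.2 1 x y y'; rewrite !scale1r. Qed.

Lemma bilinear_map0r x : f x 0 = 0.
Proof. by apply: (@addrI _ (f x 0)); rewrite -bilinear_mapDr !addr0. Qed.

Lemma bilinear_mapZr c x y : f x (c *: y) = c *: f x y.
Proof. by have := f_bil.2 c x y 0; rewrite addr0 bilinear_map0r addr0. Qed.

Lemma bilinear_mapBr x y y' : f x (y - y') = f x y - f x y'.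
Proof. by rewrite bilinear_mapDr -scaleN1r bilinear_mapZr scaleN1r. Qed.

End BilinearMap.

Section LinearMap.
Variables (K : numFieldType) (V Y : lmodType K) (g : V -> Y).
Hypothesis g_lin : linear_map g.

Lemma linear_mapD x y : g (x + y) = g x + g y.
Proof. by have := g_lin 1 x y; rewrite !scale1r. Qed.

Lemma linear_map0 : g 0 = 0.
Proof. by apply: (@addrI _ (g 0)); rewrite -linear_mapD !addr0. Qed.

Lemma linear_mapZ c x : g (c *: x) = c *: g x.
Proof. by have := g_lin c x 0; rewrite addr0 linear_map0 addr0. Qed.

End LinearMap.

Section UnitizationAlgebra.
Variables (K : numFieldType) (U : lmodType K) (mul : U -> U -> U).
Hypothesis mul_bil : bilinear_map mul.

Lemma unit_mulr1 x : unit_mul mul x (0, 1) = x.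
Proof.
case: x => a al; rewrite /unit_mul /= (bilinear_map0r mul_bil) scaler0 scale1r.
by rewrite !add0r mulr1.
Qed.

Lemma scale_pairD (V W : lmodType K) c (p p' : V) (q q' : W) :
  c *: (p, q) + (p', q') = (c *: p + p', c *: q + q').
Proof. by []. Qed.

Lemma unit_mul_linearl x : linear_map (unit_mul mul x).
Proof.
move=> c [b be] [b' be']; rewrite /unit_mul /= scale_pairD; congr (_, _).
  rewrite (bilinear_mapDr mul_bil) (bilinear_mapZr mul_bil) !scalerDr !scalerDl.
  by rewrite !scalerA [x.2 * c]mulrC !addrA (ACl (1*3*5*2*4*6)).
by rewrite mulrDr mulrCA.
Qed.

Lemma unit_mul_linearr x : linear_map (unit_mul mul ^~ x).
Proof.
move=> c [b be] [b' be']; rewrite /unit_mul /= scale_pairD; congr (_, _).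
  rewrite (bilinear_mapDl mul_bil) (bilinear_mapZl mul_bil) !scalerDr !scalerDl.
  by rewrite !scalerA [x.2 * c]mulrC !addrA (ACl (1*3*5*2*4*6)).
by rewrite mulrDl scalerAl.
Qed.

End UnitizationAlgebra.

Section UnitizationNorm.
Variables (K : numFieldType) (U : normedModType K) (mul : U -> U -> U).

Lemma unit_norm_ge0 (x : U * K) : 0 <= unit_norm x.
Proof. by rewrite addr_ge0. Qed.

Hypothesis mul_submult : forall a b, `|mul a b| <= `|a| * `|b|.

Lemma unit_norm_mul x y : unit_norm (unit_mul mul x y) <= unit_norm x * unit_norm y.
Proof.
rewrite /unit_norm /= normrM mulrDl !mulrDr addrA lerD2r [X in _ <= X]addrAC.
apply: le_trans (ler_normD _ _) _; apply: lerD; last by rewrite normrZ mulrC.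
by apply: le_trans (ler_normD _ _) _; rewrite normrZ lerD2r.
Qed.

End UnitizationNorm.

Section BoundedBilinear.
Variables (K : numFieldType) (U Y : normedModType K).
Implicit Types (P Q : U * K -> U * K -> Y) (M N : K).

Lemma bil_bounded_flip P M : bil_bounded P M -> bil_bounded (fun x y => P y x) M.
Proof.
move=> [[P1 P2] PM]; split; first by split=> c x y y'; [apply: P2 | apply: P1].
by move=> x y; rewrite mulrAC.
Qed.

Lemma bil_bounded_scale P M c :
  bil_bounded P M -> bil_bounded (fun x y => c *: P x y) (`|c| * M).
Proof.
move=> [[P1 P2] PM]; split.
  by split=> d x y y'; rewrite ?P1 ?P2 scalerDr !scalerA mulrC.
by move=> x y; rewrite normrZ -!mulrA ler_wpM2l // mulrA.
Qed.

Lemma bil_bounded_sub P Q M N : bil_bounded P M -> bil_bounded Q N ->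
  bil_bounded (fun x y => P x y - Q x y) (M + N).
Proof.
move=> [[P1 P2] PM] [[Q1 Q2] QN]; split.
  by split=> c x y y'; rewrite ?P1 ?Q1 ?P2 ?Q2 scalerBr opprD addrACA.
move=> x y; apply: le_trans (ler_normB _ _) _.
by rewrite !mulrDl lerD.
Qed.

Lemma bil_bounded_compl P M (g : U * K -> U * K) Mg :
  0 <= M -> bil_bounded P M -> linear_map g ->
  (forall x, unit_norm (g x) <= Mg * unit_norm x) ->
  bil_bounded (fun x y => P (g x) y) (M * Mg).
Proof.
move=> M0 [[P1 P2] PM] g_lin gM; split.
  by split=> c x y y'; rewrite ?g_lin ?P1 ?P2.
move=> x y; apply: le_trans (PM _ _) _.
by rewrite -[M * Mg * _]mulrA ler_wpM2r ?unit_norm_ge0 // ler_wpM2l.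
Qed.

Lemma bil_bounded_compr P M (h : U * K -> U * K) Mh :
  0 <= M -> bil_bounded P M -> linear_map h ->
  (forall y, unit_norm (h y) <= Mh * unit_norm y) ->
  bil_bounded (fun x y => P x (h y)) (M * Mh).
Proof.
move=> M0 /bil_bounded_flip PB h_lin hM.
exact: bil_bounded_flip (bil_bounded_compl M0 PB h_lin hM).
Qed.

End BoundedBilinear.

Section UnitAction.
Variables (K : numFieldType) (U X : normedModType K) (mul : U -> U -> U)
  (lact : U -> X -> X) (ract : X -> U -> X).
Hypotheses (BM : banach_bimodule mul lact ract) (SYM : symmetric_bimodule lact ract).

Definition unit_ract (v : X) (z : U * K) : X := ract v z.1 + z.2 *: v.

Let ract_bil := bm_rbilinear BM.

Lemma unit_ract_bilinear : bilinear_map unit_ract.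
Proof.
split=> c v v' z; rewrite /unit_ract /=.
  rewrite (bilinear_mapDl ract_bil) (bilinear_mapZl ract_bil) !scalerDr !scalerA mulrC.
  by rewrite !addrA (ACl (1*3*2*4)).
rewrite (bilinear_mapDr ract_bil) (bilinear_mapZr ract_bil) scalerDl -scalerA scalerDr.
by rewrite !addrA (ACl (1*3*2*4)).
Qed.

Lemma unit_ract1 v : unit_ract v (0, 1) = v.
Proof. by rewrite /unit_ract /= (bilinear_map0r ract_bil) scale1r add0r. Qed.

Lemma unit_ractA v x y :
  unit_ract (unit_ract v x) y = unit_ract v (unit_mul mul x y).
Proof.
rewrite /unit_ract /unit_mul /= !(bilinear_mapDl ract_bil, bilinear_mapDr ract_bil).
rewrite !(bilinear_mapZl ract_bil, bilinear_mapZr ract_bil) (bm_rassoc BM).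
by rewrite scalerDr scalerA [y.2 * _]mulrC !addrA.
Qed.

Lemma ract_mulC v a b : ract v (mul a b) = ract v (mul b a).
Proof. by rewrite (bm_rassoc BM) -SYM -SYM -(bm_lassoc BM) SYM. Qed.

Lemma unit_ract_mulC v x y :
  unit_ract v (unit_mul mul x y) = unit_ract v (unit_mul mul y x).
Proof.
rewrite /unit_ract /unit_mul /= !(bilinear_mapDr ract_bil) ract_mulC mulrC.
by rewrite -!addrA [X in _ + X = _]addrCA.
Qed.

End UnitAction.

Section JordanForm.
Variables (K : numFieldType) (U X : normedModType K) (mul : U -> U -> U)
  (lact : U -> X -> X) (ract : X -> U -> X) (D : U -> X).
Hypotheses (BM : banach_bimodule mul lact ract) (SYM : symmetric_bimodule lact ract)
  (DJ : jordan_derivation mul lact ract D).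

Definition deriv_form (x y : U * K) : X := unit_ract ract (D x.1) y.

Let D_lin := DJ.1.

Lemma jordan_derivation_sym a b :
  D (mul a b + mul b a) = 2 *: (ract (D a) b + ract (D b) a).
Proof. by rewrite DJ.2 !SYM scaler_nat mulr2n addrAC -addrA. Qed.

Lemma deriv_form_bilinear : bilinear_map deriv_form.
Proof.
have [ract1 ract2] := unit_ract_bilinear BM.
split=> c x x' y; rewrite /deriv_form; last exact: ract2.
by rewrite (linear_mapD D_lin) (linear_mapZ D_lin) ract1.
Qed.

Lemma jordan_derivation_unit a x : let A := (a, 0) : U * K in
  D ((unit_mul mul A x).1 + (unit_mul mul x A).1) =
  2 *: (unit_ract ract (D a) x + unit_ract ract (D x.1) A).
Proof.
case: x => u al; rewrite /unit_mul /unit_ract /= !scale0r !addr0.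
rewrite addrACA (linear_mapD D_lin) jordan_derivation_sym (linear_mapD D_lin).
by rewrite (linear_mapZ D_lin) -mulr2n !scaler_nat -mulrnDl addrAC.
Qed.

Lemma deriv_form_jordan a x y : let A := (a, 0) : U * K in
  (deriv_form (unit_mul mul A x) y - deriv_form x (unit_mul mul y A)) -
  (deriv_form x (unit_mul mul A y) - deriv_form (unit_mul mul x A) y) =
  2 *: unit_ract ract (D a) (unit_mul mul x y).
Proof.
have ract_bil := unit_ract_bilinear BM.
move=> A; rewrite opprB addrACA -opprD /deriv_form.
rewrite -(bilinear_mapDl ract_bil) -(linear_mapD D_lin) jordan_derivation_unit.
rewrite (unit_ract_mulC BM SYM _ y) (bilinear_mapZl ract_bil).
rewrite (bilinear_mapDl ract_bil) !(unit_ractA BM).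
by rewrite !scaler_nat !mulr2n addrACA addrK.
Qed.

End JordanForm.

Section NormEstimates.
Variable K : numFieldType.

Lemma norm_le_eps_eq0 (V : normedModType K) (v : V) (Q : K) :
  (forall eps, 0 < eps -> `|v| <= eps * Q) -> v = 0.
Proof.
move=> vQ; have Q0 : 0 <= Q by have := vQ 1 ltr01; rewrite mul1r; exact: le_trans.
have Q1 : 0 < Q + 1 := ltr_wpDl Q0 ltr01.
apply/normr0_eq0/le_anti; rewrite normr_ge0 andbT; apply/ler_addgt0Pr => e e0.
rewrite add0r; apply: le_trans (vQ (e / (Q + 1)) _) _; first by rewrite divr_gt0.
by rewrite mulrAC ler_pdivrMr // ler_wpM2l ?lerDl // ltW.
Qed.

Lemma bounded_map_gt0 (V Y : normedModType K) (f : V -> Y) :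
  bounded_map f -> exists2 M, 0 < M & forall a, `|f a| <= M * `|a|.
Proof.
move=> [M fM]; exists (`|M| + 1) => [|a]; first exact: ltr_wpDl.
have Ma0 : 0 <= M * `|a| := le_trans (normr_ge0 _) (fM a).
apply: le_trans (fM a) _; rewrite -(ger0_norm Ma0) normrM normr_id.
by rewrite ler_wpM2r // lerDl.
Qed.

Lemma cvg_lipschitz_at (V W : normedModType K) (g : V -> W) (C : K) (s : nat -> V) l :
  0 < C -> (forall v, `|g v - g l| <= C * `|v - l|) ->
  (s @ \oo --> l)%classic -> (g \o s @ \oo --> g l)%classic.
Proof.
move=> C0 gC /cvgrPdist_lt sl; apply/cvgrPdist_lt => e e0.
near=> n; have sl_n := near (sl _ (divr_gt0 e0 C0)) n.
rewrite distrC; apply: le_lt_trans (gC _) _.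
by rewrite -ltr_pdivlMl // mulrC distrC; exact: sl_n.
Unshelve. all: by end_near.
Qed.

Variables (U X : normedModType K) (ract : X -> U -> X).

Lemma unit_ract_norm_le Mb : 0 <= Mb ->
  (forall a v, `|ract v a| <= Mb * `|a| * `|v|) ->
  forall v z, `|unit_ract ract v z| <= (Mb + 1) * `|v| * unit_norm z.
Proof.
move=> Mb0 ractM v z; apply: le_trans (ler_normD _ _) _.
rewrite normrZ /unit_norm mulrDr mulrDl mul1r; apply: lerD.
  by apply: le_trans (ractM _ _) _; rewrite mulrAC ler_wpM2r // lerDl.
by rewrite mulrC ler_wpM2r // ler_wpDl ?mulr_ge0.
Qed.

Lemma deriv_form_norm_le (D : U -> X) Mr MD : 0 <= Mr -> 0 <= MD ->
  (forall v z, `|unit_ract ract v z| <= Mr * `|v| * unit_norm z) ->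
  (forall a, `|D a| <= MD * `|a|) ->
  forall x y, `|deriv_form ract D x y| <= Mr * MD * unit_norm x * unit_norm y.
Proof.
move=> Mr0 MD0 ractM DM x y; apply: le_trans (ractM _ _) _.
rewrite -!mulrA ler_wpM2l // !mulrA ler_wpM2r ?unit_norm_ge0 //.
by apply: le_trans (DM _) _; rewrite ler_wpM2l ?lerDl.
Qed.

End NormEstimates.

Section BoundedForms.
Variables (K : numFieldType) (U X : normedModType K) (mul : U -> U -> U)
  (lact : U -> X -> X) (ract : X -> U -> X) (D : U -> X).
Hypotheses (BM : banach_bimodule mul lact ract) (DJ : jordan_derivation mul lact ract D).

Lemma unit_ract_bounded : exists2 Mr : K, 0 < Mr &
  forall v z, `|unit_ract ract v z| <= Mr * `|v| * unit_norm z.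
Proof.
have [Mb [Mb0 HMb]] := bm_bounded BM.
exists (Mb + 1); first exact: ltr_wpDl (ltW Mb0) ltr01.
by apply: unit_ract_norm_le (ltW Mb0) _ => a v; case: (HMb a v).
Qed.

Lemma deriv_form_bil_bounded : bounded_map D ->
  exists2 C : K, 0 < C & bil_bounded (deriv_form ract D) C.
Proof.
move=> /bounded_map_gt0[MD MD0 DM]; have [Mr Mr0 ractM] := unit_ract_bounded.
exists (Mr * MD); first exact: mulr_gt0.
split; first exact: deriv_form_bilinear BM DJ.
exact: deriv_form_norm_le (ltW Mr0) (ltW MD0) ractM DM.
Qed.

End BoundedForms.

Section ComplexSeries.
Variable R : realType.
Local Notation K := (Cplx R).
Local Open Scope complex_scope.

(* Completeness of R[i] is not available as an instance, so complex series are
   summed through their real and imaginary parts. *)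
Lemma real_series_cvg (f : nat -> R) (B : R) :
  (forall N, \sum_(n < N) `|f n| <= B) -> cvgn (series f).
Proof.
move=> fB; apply: normed_cvg; apply: nondecreasing_is_cvgn.
  by move=> m n mn /=; apply: nondecreasing_series.
by exists B => _ [n _ <-]; rewrite /= seriesEord; exact: fB.
Qed.

Lemma Re_le_norm (z : K) : `|complex.Re z| <= complex.Re `|z|.
Proof. by rewrite normc_def /= -sqrtr_sqr ler_wsqrtr // lerDl sqr_ge0. Qed.

Lemma Im_le_norm (z : K) : `|complex.Im z| <= complex.Re `|z|.
Proof. by rewrite normc_def /= -sqrtr_sqr ler_wsqrtr // lerDr sqr_ge0. Qed.

Lemma norm_le_Re_Im (z : K) : complex.Re `|z| <= `|complex.Re z| + `|complex.Im z|.
Proof.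
rewrite normc_def /= -(ger0_norm (addr_ge0 (normr_ge0 _) (normr_ge0 _))) -sqrtr_sqr.
rewrite ler_wsqrtr // sqrrD !real_normK ?num_real // lerD2r lerDl.
by rewrite mulrn_wge0 // mulr_ge0.
Qed.

Lemma cvg_complex (s : nat -> K) (a b : R) :
  ((fun n => complex.Re (s n)) @ \oo --> a)%classic ->
  ((fun n => complex.Im (s n)) @ \oo --> b)%classic ->
  (s @ \oo --> ((a +i* b : R[i]) : K))%classic.
Proof.
move=> /cvgrPdist_lt Re_s /cvgrPdist_lt Im_s; apply/cvgrPdist_lt => e e0.
have e2 : 0 < complex.Re e / 2 by rewrite divr_gt0 //; move: e0; rewrite ltcE => /andP[].
near=> n; have Re_lt := near (Re_s _ e2) n; have Im_lt := near (Im_s _ e2) n.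
move: Re_lt Im_lt; case: (s n) => p q /= Re_lt Im_lt.
rewrite -[e]RRe_real ?gtr0_real // ltcR.
apply: le_lt_trans (norm_le_Re_Im ((a - p) +i* (b - q))) _.
by rewrite [X in _ < X]splitr; apply: ltrD; [exact: Re_lt | exact: Im_lt].
Unshelve. all: by end_near.
Qed.

Lemma abs_summable_cvg_complex (u : nat -> K) (M : K) :
  (forall N, \sum_(n < N) `|u n| <= M) -> cvgn (series u).
Proof.
move=> uM.
have partsM (f : K -> R) : (forall z, `|f z| <= complex.Re `|z|) ->
    cvgn (series (f \o u)).
  move=> fz; apply: (@real_series_cvg _ (complex.Re M)) => N.
  have := uM N; rewrite lecE => /andP[_]; apply: le_trans.
  by rewrite raddf_sum /=; apply: ler_sum => n _; exact: fz.
have /cvg_ex[a Re_u] := partsM _ Re_le_norm.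
have /cvg_ex[b Im_u] := partsM _ Im_le_norm.
apply/cvg_ex; exists ((a +i* b : R[i]) : K); apply: cvg_complex.
  by apply: cvg_trans Re_u; under eq_fun do rewrite /= raddf_sum.
by apply: cvg_trans Im_u; under eq_fun do rewrite /= raddf_sum.
Qed.

End ComplexSeries.

Section TensorEvaluation.
Variable R : realType.
Local Notation K := (Cplx R).
Variable U : completeNormedModType K.
Implicit Types (t : tens_rep K U) (Y : completeNormedModType K).

Lemma dominated_series_cvg (V : completeNormedModType K) (u : nat -> V) (w : nat -> K) :
  (forall n, `|u n| <= w n) -> cvgn (series w) -> cvgn (series u).
Proof.
move=> uw /cvg_cauchy/cauchy_seriesP w_cauchy.
apply/cauchy_cvgP/cauchy_seriesP => e /w_cauchy; apply: filterS => n /=.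
have w0 k : 0 <= w k := le_trans (normr_ge0 _) (uw k).
apply: le_lt_trans; apply: le_trans (ler_norm_sum _ _ _) _.
rewrite ger0_norm ?sumr_ge0 //; exact: ler_sum.
Qed.

Lemma abs_summable_weight_cvg t : abs_summable t ->
  cvgn (series (fun n => unit_norm (t n).1 * unit_norm (t n).2)).
Proof.
move=> [M tM]; apply: (@abs_summable_cvg_complex _ _ M) => N.
by under eq_bigr do rewrite ger0_norm ?mulr_ge0 ?unit_norm_ge0 //.
Qed.

Lemma tens_eval_cvg Y (P : U * K -> U * K -> Y) M t :
  bil_bounded P M -> abs_summable t -> cvgn (series (fun n => P (t n).1 (t n).2)).
Proof.
move=> [_ PM] /abs_summable_weight_cvg /(is_cvg_seriesZ (k := M)) w_cvg.
by apply: dominated_series_cvg w_cvg => n; rewrite fctE scalerAl; exact: PM.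
Qed.

Lemma tens_evalB Y (P Q : U * K -> U * K -> Y) M N t :
  bil_bounded P M -> bil_bounded Q N -> abs_summable t ->
  tens_eval (fun x y => P x y - Q x y) t = tens_eval P t - tens_eval Q t.
Proof.
move=> PM QN ts; have := tens_eval_cvg PM ts; have := tens_eval_cvg QN ts.
by rewrite /tens_eval => Q_cvg P_cvg; rewrite -limB // -seriesN -seriesD.
Qed.

End TensorEvaluation.

Lemma series_pair (V W : zmodType) (f : nat -> V * W) n :
  series f n = (series (fst \o f) n, series (snd \o f) n).
Proof.
rewrite /series /=; elim: n => [|n IH]; first by rewrite !big_geq.
by rewrite !big_nat_recr //= IH.
Qed.

Section UnitizationTensor.
Variable R : realType.
Local Notation K := (Cplx R).
Variables (U : completeNormedModType K) (mul : U -> U -> U).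
Hypothesis BA : banach_algebra mul.
Implicit Type t : tens_rep K U.

Definition tens_symmetric t := forall (Y : completeNormedModType K)
  (P : U * K -> U * K -> Y) M, bil_bounded P M -> tens_eval (fun x y => P y x) t = tens_eval P t.

Definition tens_eval_comm (Y : normedModType K) (P : U * K -> U * K -> Y) a t :=
  tens_eval (fun x y => P (unit_mul mul a x) y) t - tens_eval (fun x y => P x (unit_mul mul y a)) t.

Lemma tens_pi_cvg t : abs_summable t ->
  let f n := unit_mul mul (t n).1 (t n).2 in
  (series (fst \o f) @ \oo --> (tens_pi mul t).1)%classic /\
  (series (snd \o f) @ \oo --> (tens_pi mul t).2)%classic.
Proof.
move=> ts f; have [Mt tM] := ts.
have f_le n : unit_norm (f n) <= unit_norm (t n).1 * unit_norm (t n).2.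
  exact: unit_norm_mul (ba_submult BA) _ _.
have f1_cvg : cvgn (series (fst \o f)).
  apply: dominated_series_cvg (abs_summable_weight_cvg ts) => n.
  by apply: le_trans (f_le n); rewrite lerDl.
have f2_cvg : cvgn (series (snd \o f)).
  apply: (@abs_summable_cvg_complex _ _ Mt) => N; apply: le_trans (tM N).
  by apply: ler_sum => n _; apply: le_trans (f_le n); rewrite lerDr.
suff -> : tens_pi mul t = (limn (series (fst \o f)), limn (series (snd \o f))) by [].
apply: norm_cvg_lim; rewrite (funext (series_pair f)).
exact: cvg_pair f1_cvg f2_cvg.
Qed.

Variables (X : completeNormedModType K) (lact : U -> X -> X) (ract : X -> U -> X).
Hypothesis BM : banach_bimodule mul lact ract.

Lemma tens_eval_unit_ract v t : abs_summable t ->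
  tens_eval (fun x y => unit_ract ract v (unit_mul mul x y)) t =
  unit_ract ract v (tens_pi mul t).
Proof.
move=> ts; have [pi1 pi2] := tens_pi_cvg ts; rewrite /tens_eval /=.
set f := fun n => unit_mul mul (t n).1 (t n).2 in pi1 pi2 *.
have ract_bil := bm_rbilinear BM; have [Mb [Mb0 HMb]] := bm_bounded BM.
have -> : series (fun n => unit_ract ract v (f n)) =
    (fun n => ract v (series (fst \o f) n) + series (snd \o f) n *: v).
  apply: funext => n; rewrite /series /= big_split /= -scaler_suml.
  by rewrite (big_morph (ract v) (bilinear_mapDr ract_bil v) (bilinear_map0r ract_bil v)).
apply: norm_cvg_lim; apply: cvgD; last exact: cvgZr_tmp pi2.
apply: (cvg_lipschitz_at (g := ract v) (C := Mb * `|v| + 1)) pi1 => [|z].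
  by rewrite ltr_wpDl // mulr_ge0 // ltW.
rewrite -(bilinear_mapBr ract_bil); apply: le_trans (HMb _ _).2 _.
by rewrite mulrAC ler_wpM2r // lerDl.
Qed.

End UnitizationTensor.

Section JordanDerivationVanishes.
Variable R : realType.
Local Notation K := (Cplx R).
Variables (U X : completeNormedModType K) (mul : U -> U -> U)
  (lact : U -> X -> X) (ract : X -> U -> X) (D : U -> X).
Hypotheses (BA : banach_algebra mul) (BM : banach_bimodule mul lact ract)
  (SYM : symmetric_bimodule lact ract) (DJ : jordan_derivation mul lact ract D).
Implicit Type t : tens_rep K U.

Lemma tens_eval_comm_deriv_form C c a t :
  bil_bounded (deriv_form ract D) C -> 0 <= C -> abs_summable t -> tens_symmetric t ->
  let Phi x y := c *: deriv_form ract D x y in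
  tens_eval_comm mul Phi (a, 0) t - tens_eval_comm mul (fun x y => Phi y x) (a, 0) t =
  (2 * c) *: unit_ract ract (D a) (tens_pi mul t).
Proof.
move=> formC C0 ts t_sym Phi; set A := (a, 0) : U * K.
have PhiB : bil_bounded Phi (`|c| * C) := bil_bounded_scale c formC.
have M0 : 0 <= `|c| * C by rewrite mulr_ge0.
have [mul_bil mul_le] := (ba_bilinear BA, unit_norm_mul (ba_submult BA)).
have mulA_le x : unit_norm (unit_mul mul x A) <= unit_norm A * unit_norm x.
  by rewrite mulrC mul_le.
have B1 := bil_bounded_compl M0 PhiB (unit_mul_linearl mul_bil A) (mul_le A).
have B2 := bil_bounded_compr M0 PhiB (unit_mul_linearr mul_bil A) mulA_le.
have B3 := bil_bounded_compr M0 PhiB (unit_mul_linearl mul_bil A) (mul_le A).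
have B4 := bil_bounded_compl M0 PhiB (unit_mul_linearr mul_bil A) mulA_le.
rewrite /tens_eval_comm (t_sym _ _ _ B3) (t_sym _ _ _ B4).
rewrite -(tens_evalB B1 B2 ts) -(tens_evalB B3 B4 ts).
rewrite -(tens_evalB (bil_bounded_sub B1 B2) (bil_bounded_sub B3 B4) ts).
have ract_bil := unit_ract_bilinear BM.
rewrite -(bilinear_mapZl ract_bil) -(tens_eval_unit_ract BA BM _ ts).
congr tens_eval; apply: funext => x; apply: funext => y.
rewrite /Phi -!scalerBr (deriv_form_jordan BM SYM DJ) (bilinear_mapZl ract_bil).
by rewrite scalerA mulrC.
Qed.

Lemma unit_ract_pi_le C a t eps : 0 < C -> bil_bounded (deriv_form ract D) C ->
  abs_summable t -> tens_symmetric t ->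
  let Phi x y := C^-1 *: deriv_form ract D x y in
  `|tens_eval_comm mul Phi (a, 0) t| <= eps ->
  `|tens_eval_comm mul (fun x y => Phi y x) (a, 0) t| <= eps ->
  `|unit_ract ract (D a) (tens_pi mul t)| <= C * eps.
Proof.
move=> C0 formC ts t_sym Phi comm1 comm2.
have := le_trans (ler_normB _ _) (lerD comm1 comm2).
rewrite (tens_eval_comm_deriv_form _ _ formC (ltW C0) ts t_sym) normrZ.
have k0 : 0 < 2 / C by rewrite divr_gt0.
rewrite (gtr0_norm k0) => le2; rewrite -(ler_pM2l k0) (le_trans le2) //.
by rewrite mulrA divfK ?gt_eqF // mulr_natl mulr2n.
Qed.

Hypotheses (AM : unitization_sym_pseudo_amenable mul) (DB : bounded_map D).

Lemma jordan_derivation_eq0 a : D a = 0.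
Proof.
have [C C0 formC] := deriv_form_bil_bounded BM DJ DB.
have [Mr Mr0 ractM] := unit_ract_bounded BM.
apply: (@norm_le_eps_eq0 _ _ _ (C + Mr * `|D a|)) => eps eps0.
have [I [leI [t [[_ [_ [_ leI_ub]]] [t_sum [t_sym [t_comm t_unit]]]]]]] := AM.
have PhiB : bil_bounded (fun x y => C^-1 *: deriv_form ract D x y) 1.
  have := bil_bounded_scale C^-1 formC.
  by rewrite ger0_norm ?invr_ge0 ?(ltW C0) // mulVf ?lt0r_neq0.
have [i0 comm_i0] := t_comm (a, 0) eps eps0.
have [i1 unit_i1] := t_unit (0, 1) eps eps0.
have [k [i0k i1k]] := leI_ub i0 i1.
have pi_le := unit_ract_pi_le C0 formC (t_sum k) (t_sym k)
  (comm_i0 k i0k X _ PhiB) (comm_i0 k i0k X _ (bil_bounded_flip PhiB)).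
have pi1_le := unit_i1 k i1k; rewrite (unit_mulr1 (ba_bilinear BA)) in pi1_le.
set u := unit_ract ract (D a) (tens_pi mul (t k)) in pi_le *.
have dist_le : `|u - D a| <= Mr * `|D a| * eps.
  rewrite /u -{2}(unit_ract1 BM (D a)) -(bilinear_mapBr (unit_ract_bilinear BM)).
  by apply: le_trans (ractM _ _) _; rewrite ler_wpM2l // mulr_ge0 // ltW.
rewrite -{1}(subKr u (D a)); apply: le_trans (ler_normB _ _) _.
have -> : eps * (C + Mr * `|D a|) = C * eps + Mr * `|D a| * eps by ring.
exact: lerD.
Qed.

End JordanDerivationVanishes.

Theorem corollary5p4 (R : realType)
    (U : completeNormedModType (Cplx R)) (mul : U -> U -> U)
    (X : completeNormedModType (Cplx R))
    (lact : U -> X -> X) (ract : X -> U -> X) (D : U -> X) :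
  banach_algebra mul ->
  unitization_sym_pseudo_amenable mul ->
  banach_bimodule mul lact ract ->
  symmetric_bimodule lact ract ->
  bounded_map D ->
  jordan_derivation mul lact ract D ->
  derivation mul lact ract D.
Proof.
move=> BA AM BM SYM DB DJ.
have D0 := jordan_derivation_eq0 BA BM SYM DJ AM DB.
split=> [|a b]; first exact: DJ.1.
rewrite !D0 (bilinear_map0l (bm_rbilinear BM)) (bilinear_map0r (bm_lbilinear BM)).
by rewrite addr0.
Qed.
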